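(* In any commitment scheme with non-colluding bidders as described in the context, for every $\ell\in\mathcal{L}$, $(A_\ell,S_\ell)-(M_\ell,X_\ell^n)-(Y^n,S'_\ell)$ forms a Markov chain.
   Context: Setting: $L$ bidders $\mathcal{L}=\{1,\dots,L\}$ and one verifier connected by a discrete memoryless multiple-access channel $p_{Y|X_{\mathcal{L}}}$ with finite alphabets, plus a noiseless channel. Bidder $\ell$ has a random message $A_\ell$ and private local randomness $S_\ell$; the verifier has local randomness $S'_\ell$ for each $\ell$; all messages and local randomness variables are mutually independent. For $i=1,\dots,n$, bidder $\ell$ sends channel input $X_{\ell,i}$ as a function of $(A_\ell,S_\ell)$ and the verifier messages to it received so far; then $r_i$ rounds of noiseless communication follow: in round $j$ bidder $\ell$ sends $M_{\ell,i,j}$ as a function of $(A_\ell,S_\ell)$ and the previous verifier messages $M'_{\ell,1:i,1:j-1}$, and the verifier replies $M'_{\ell,i,j}$ as a function of $(S'_\ell, M_{\ell,1:i,1:j}, Y^i)$ where $Y^i=(Y_1,\dots,Y_i)$ are the channel outputs so far. $M_\ell$ denotes the entire noiseless exchange (both directions) between bidder $\ell$ and the verifier, and $X_\ell^n=(X_{\ell,1},\dots,X_{\ell,n})$. *)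

From HB Require Import structures.
From mathcomp Require Import all_boot all_order all_algebra.
Set Implicit Arguments. Unset Strict Implicit. Unset Printing Implicit Defensive.
Import Order.TTheory GRing.Theory Num.Theory.
Local Open Scope ring_scope.

Definition prob {R : realFieldType} {Om : finType} (p : Om -> R) (E : pred Om) : R :=
  \sum_(o : Om | E o) p o.

(* U - V - W is a Markov chain under p:  P(u,v,w) P(v) = P(u,v) P(v,w)
   for all values u v w (i.e. U and W are conditionally independent given V). *)
Definition markov_chain {R : realFieldType} {Om : finType} (p : Om -> R)
  {TU TV TW : eqType} (U : Om -> TU) (V : Om -> TV) (W : Om -> TW) : Prop :=
  forall u v w,
    prob p [pred o | (U o == u) && (V o == v) && (W o == w)] * prob p [pred o | V o == v]
    = prob p [pred o | (U o == u) && (V o == v)] * prob p [pred o | (V o == v) && (W o == w)].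

Section Scheme.
(* L bidders indexed by 'I_L, blocklength n, per-bidder finite alphabets. *)
Variables (R : realFieldType) (L n : nat).
Variables (A S S' X MB MV : 'I_L -> finType) (Y : finType).
(* r i = number of noiseless rounds after channel use i (0-based, i < n). *)
Variable r : nat -> nat.
(* enc l i a s mv'   : channel input X_{l,i} from (A_l,S_l) and the verifier
                        messages to l received so far.
   bmsg l i j a s mv' : bidder message M_{l,i,j} from (A_l,S_l) and previous
                        verifier messages M'_{l,1:i,1:j-1}.
   vmsg l i j s' mb ys: verifier reply M'_{l,i,j} from S'_l, M_{l,1:i,1:j}, Y^i. *)
Variable enc : forall l : 'I_L, nat -> A l -> S l -> seq (MV l) -> X l.
Variable bmsg : forall l : 'I_L, nat -> nat -> A l -> S l -> seq (MV l) -> MB l.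
Variable vmsg : forall l : 'I_L, nat -> nat -> S' l -> seq (MB l) -> seq Y -> MV l.

(* noiseless rounds after channel use i; the state is (bidder msgs, verifier msgs)
   exchanged so far between bidder l and the verifier, ys = outputs Y^n. *)
Definition rounds (l : 'I_L) (a : A l) (s : S l) (s' : S' l) (ys : seq Y) (i : nat)
  (st : seq (MB l) * seq (MV l)) : seq (MB l) * seq (MV l) :=
  foldl (fun (st : seq (MB l) * seq (MV l)) (j : nat) =>
           let mb := rcons st.1 (@bmsg l i j a s st.2) in
           (mb, rcons st.2 (@vmsg l i j s' mb (take i.+1 ys))))
        st (iota 0 (r i)).

Fixpoint transcript (l : 'I_L) (a : A l) (s : S l) (s' : S' l) (ys : seq Y) (k : nat)
  : seq (MB l) * seq (MV l) :=
  match k with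
  | 0 => ([::], [::])
  | k'.+1 => rounds a s s' ys k' (transcript a s s' ys k')
  end.

Definition outcome : finType :=
  ({dffun forall l, A l} * {dffun forall l, S l} * {dffun forall l, S' l} * n.-tuple Y)%type.

Definition out_A (o : outcome) := o.1.1.1.
Definition out_S (o : outcome) := o.1.1.2.
Definition out_S' (o : outcome) := o.1.2.
Definition out_Y (o : outcome) : n.-tuple Y := o.2.

(* M_l : the whole noiseless exchange between bidder l and the verifier *)
Definition M_rv (l : 'I_L) (o : outcome) : seq (MB l) * seq (MV l) :=
  transcript (out_A o l) (out_S o l) (out_S' o l) (out_Y o) n.

Definition X_at (l : 'I_L) (o : outcome) (i : nat) : X l :=
  @enc l i (out_A o l) (out_S o l)
      (transcript (out_A o l) (out_S o l) (out_S' o l) (out_Y o) i).2.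

Definition Xn_rv (l : 'I_L) (o : outcome) : n.-tuple (X l) :=
  [tuple X_at l o i | i < n].

Definition Xall_at (o : outcome) (i : nat) : {dffun forall l, X l} :=
  finfun (fun l => X_at l o i).

Variables (PA : forall l, A l -> R) (PS : forall l, S l -> R) (PS' : forall l, S' l -> R).
Variable W : {dffun forall l, X l} -> Y -> R.

Definition joint (o : outcome) : R :=
  (\prod_(l < L) @PA l (out_A o l)) * (\prod_(l < L) @PS l (out_S o l))
  * (\prod_(l < L) @PS' l (out_S' o l))
  * \prod_(i < n) W (Xall_at o i) (tnth (out_Y o) i).

Definition is_pmf (T : finType) (p : T -> R) : Prop :=
  (forall t, 0 <= p t) /\ \sum_(t : T) p t = 1.

End Scheme.

From HB Require Import structures.
From mathcomp Require Import all_boot all_order all_algebra ring.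
Import Order.TTheory GRing.Theory Num.Theory.
Set Implicit Arguments. Unset Strict Implicit. Unset Printing Implicit Defensive.
Local Open Scope ring_scope.

(* Bidder l's exchange with the verifier is a deterministic two-party protocol
   in which the bidder speaks as a function of (A_l, S_l) and the verifier as a
   function of (S'_l, Y^n); the channel inputs X_l^n are functions of (A_l, S_l)
   and that exchange.  Such protocols have the rectangle property: if two
   outcomes x and z give the same (M_l, X_l^n), then so does the outcome that
   takes (A_l, S_l) from x and everything else from z.  Swapping (A_l, S_l)
   between x and z thus preserves the conditioning variable, and since the
   inputs of all bidders at every channel use are unchanged, it preserves the
   product of the two joint probabilities.  Summing over pairs (x, z) and
   reindexing by this involution gives the Markov identity. *)

Lemma markov_chain_of_swap (R : realFieldType) (Om : finType) (p : Om -> R)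
    (TU TV TW : eqType) (U : Om -> TU) (V : Om -> TV) (W : Om -> TW)
    (swap : Om -> Om -> Om) :
  (forall x z, swap (swap x z) (swap z x) = x) ->
  (forall x z, U (swap x z) = U x) ->
  (forall x z, W (swap x z) = W z) ->
  (forall x z, V x = V z -> V (swap x z) = V x) ->
  (forall x z, V x = V z -> p (swap x z) * p (swap z x) = p x * p z) ->
  markov_chain p U V W.
Proof.
move=> swapK swapU swapW swapV swap_p u v w.
rewrite /prob !big_distrlr !pair_big_dep /=.
pose swap2 (xz : Om * Om) := (swap xz.1 xz.2, swap xz.2 xz.1).
have swap2K : involutive swap2 by case=> x z; rewrite /swap2 /= !swapK.
rewrite [RHS](reindex_inj (inv_inj swap2K)) /=.
apply: eq_big => [[x z]|[x z] /andP[/andP[/andP[_ /eqP Vx] _] /eqP Vz]] /=; last first.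
  by rewrite swap_p // Vx Vz.
rewrite !swapU !swapW; apply/idP/idP.
  case/andP=> /andP[/andP[Ux /eqP Vx] Wx] /eqP Vz.
  have Vxz : V x = V z by rewrite Vx Vz.
  by rewrite Ux Wx swapV // (swapV z x) // -Vxz Vx eqxx.
case/andP=> /andP[Ux /eqP V1] /andP[/eqP V2 Wx].
have V12 : V (swap x z) = V (swap z x) by rewrite V1 V2.
have Vx := swapV _ _ V12; have Vz := swapV _ _ (esym V12).
rewrite swapK in Vx; rewrite swapK in Vz.
by rewrite Ux Wx Vx Vz V1 V2 eqxx.
Qed.

Lemma prod_swap_at (R : comPzSemiRingType) (I : finType) (T : I -> Type)
    (f : forall i, T i -> R) (i0 : I) (g1 g2 h1 h2 : forall i, T i) :
  (forall i, h1 i = if i == i0 then g1 i else g2 i) ->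
  (forall i, h2 i = if i == i0 then g2 i else g1 i) ->
  (\prod_i f i (h1 i)) * (\prod_i f i (h2 i))
  = (\prod_i f i (g1 i)) * (\prod_i f i (g2 i)).
Proof.
move=> h1E h2E; rewrite -!big_split; apply: eq_bigr => i _.
by rewrite h1E h2E; case: eqP => // _; rewrite /= mulrC.
Qed.

Section Exchange.

Variables (J MB MV : Type).
Implicit Types (b : J -> seq MV -> MB) (v : J -> seq MB -> MV) (st : seq MB * seq MV).

Definition exchange_step b v st (j : J) : seq MB * seq MV :=
  let mb := rcons st.1 (b j st.2) in (mb, rcons st.2 (v j mb)).

Definition exchange b v (js : seq J) st : seq MB * seq MV :=
  foldl (exchange_step b v) st js.

Lemma exchange_cat b v js1 js2 st :
  exchange b v (js1 ++ js2) st = exchange b v js2 (exchange b v js1 st).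
Proof. exact: foldl_cat. Qed.

Lemma exchange_extends b v js st : exists e1 e2,
  [/\ exchange b v js st = (st.1 ++ e1, st.2 ++ e2), size e1 = size js & size e2 = size js].
Proof.
elim: js st => [|j js IH] st /=; first by exists [::], [::]; rewrite !cats0; case: st.
have [e1 [e2 [-> s1 s2]]] := IH (exchange_step b v st j).
by exists (b j st.2 :: e1), (v j (rcons st.1 (b j st.2)) :: e2); rewrite -!cat_rcons /= s1 s2.
Qed.

Lemma exchange_prefix b1 v1 b2 v2 js1 js2 st :
  exchange b1 v1 (js1 ++ js2) st = exchange b2 v2 (js1 ++ js2) st ->
  exchange b1 v1 js1 st = exchange b2 v2 js1 st.
Proof.
rewrite !exchange_cat.
have [e1 [e2 [-> s1 s2]]] := exchange_extends b1 v1 js1 st.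
have [f1 [f2 [-> t1 t2]]] := exchange_extends b2 v2 js1 st.
have [g1 [g2 [-> _ _]]] := exchange_extends b1 v1 js2 (st.1 ++ e1, st.2 ++ e2).
have [h1 [h2 [-> _ _]]] := exchange_extends b2 v2 js2 (st.1 ++ f1, st.2 ++ f2).
rewrite /= -!catA => -[E1 E2].
have {}E1 := congr1 (take (size st.1 + size js1)) E1.
have {}E2 := congr1 (take (size st.2 + size js1)) E2.
move: E1 E2; rewrite !catA !take_size_cat ?size_cat ?s1 ?s2 ?t1 ?t2 //.
by move=> -> ->.
Qed.

Lemma exchange_rect b1 v1 b2 v2 js st :
  exchange b1 v1 js st = exchange b2 v2 js st ->
  exchange b1 v2 js st = exchange b1 v1 js st.
Proof.
elim: js st => [|j js IH] st //= E.
have /(exchange_prefix (js1 := [:: j])) /= step_eq := E.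
have -> : exchange_step b1 v2 st j = exchange_step b1 v1 st j.
  by move: step_eq; rewrite /exchange_step => -[-> ->].
by apply: IH; rewrite E step_eq.
Qed.

End Exchange.

Fixpoint schedule (r : nat -> nat) (k : nat) : seq (nat * nat) :=
  if k is k'.+1 then schedule r k' ++ [seq (k', j) | j <- iota 0 (r k')] else [::].

Lemma schedule_prefix r k m : (k <= m)%N -> exists rest, schedule r m = schedule r k ++ rest.
Proof.
elim: m => [|m IH]; first by rewrite leqn0 => /eqP ->; exists [::].
rewrite leq_eqVlt => /orP[/eqP ->|]; first by exists [::]; rewrite cats0.
by case/IH=> rest E; exists (rest ++ [seq (m, j) | j <- iota 0 (r m)]); rewrite /= E catA.
Qed.

Section Scheme.

Variables (R : realFieldType) (L n : nat) (A S S' X MB MV : 'I_L -> finType) (Y : finType).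
Variable r : nat -> nat.
Variable enc : forall l : 'I_L, nat -> A l -> S l -> seq (MV l) -> X l.
Variable bmsg : forall l : 'I_L, nat -> nat -> A l -> S l -> seq (MV l) -> MB l.
Variable vmsg : forall l : 'I_L, nat -> nat -> S' l -> seq (MB l) -> seq Y -> MV l.
Variables (PA : forall l, A l -> R) (PS : forall l, S l -> R) (PS' : forall l, S' l -> R).
Variable W : {dffun forall l, X l} -> Y -> R.
Variable l : 'I_L.

Lemma transcript_exchange (a : A l) (s : S l) (s' : S' l) ys k :
  transcript r bmsg vmsg a s s' ys k =
  exchange (fun ij ms => @bmsg l ij.1 ij.2 a s ms)
           (fun ij mb => @vmsg l ij.1 ij.2 s' mb (take ij.1.+1 ys))
           (schedule r k) ([::], [::]).
Proof.
elim: k => [|k IH] //=; rewrite exchange_cat -IH /rounds.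
by elim: (iota 0 (r k)) (transcript _ _ _ _ _ _ _ k) => [|j js IHj] st //=; apply: IHj.
Qed.

Lemma transcript_rect (a1 a2 : A l) (s1 s2 : S l) (s1' s2' : S' l) ys1 ys2 k :
  transcript r bmsg vmsg a1 s1 s1' ys1 n = transcript r bmsg vmsg a2 s2 s2' ys2 n ->
  (k <= n)%N ->
  transcript r bmsg vmsg a1 s1 s2' ys2 k = transcript r bmsg vmsg a1 s1 s1' ys1 k.
Proof.
rewrite !transcript_exchange => E /(schedule_prefix r) [rest Erest].
by rewrite Erest in E; apply: exchange_rect (exchange_prefix E).
Qed.

Local Notation transcript_at k o :=
  (transcript r bmsg vmsg (out_A o l) (out_S o l) (out_S' o l) (out_Y o) k).
Local Notation M := (M_rv r bmsg vmsg l).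
Local Notation Xn := (Xn_rv r enc bmsg vmsg l).

Definition swap_bidder (x z : outcome n A S S' Y) : outcome n A S S' Y :=
  ((finfun (fun k => if k == l then out_A x k else out_A z k) : {dffun forall k, A k}),
   (finfun (fun k => if k == l then out_S x k else out_S z k) : {dffun forall k, S k}),
   out_S' z, out_Y z).

Lemma swap_bidder_A x z k :
  out_A (swap_bidder x z) k = if k == l then out_A x k else out_A z k.
Proof. by rewrite /out_A ffunE. Qed.

Lemma swap_bidder_S x z k :
  out_S (swap_bidder x z) k = if k == l then out_S x k else out_S z k.
Proof. by rewrite /out_S ffunE. Qed.

Lemma swap_bidderK x z : swap_bidder (swap_bidder x z) (swap_bidder z x) = x.
Proof.
case: x => [[[a s] s'] ys].
by congr (_, _, _, _); apply/ffunP => k; rewrite !ffunE; case: eqP => // ->.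
Qed.

Lemma transcript_swap_bidder x z k : M x = M z -> (k <= n)%N ->
  transcript_at k (swap_bidder x z) = transcript_at k x.
Proof. by rewrite swap_bidder_A swap_bidder_S eqxx; apply: transcript_rect. Qed.

Lemma X_at_swap_bidder x z i : M x = M z -> (i <= n)%N ->
  X_at r enc bmsg vmsg l (swap_bidder x z) i = X_at r enc bmsg vmsg l x i.
Proof.
by move=> Mxz le_in; rewrite /X_at transcript_swap_bidder // swap_bidder_A swap_bidder_S eqxx.
Qed.

Lemma X_at_swap_other x z k i : k != l ->
  X_at r enc bmsg vmsg k (swap_bidder x z) i = X_at r enc bmsg vmsg k z i.
Proof. by move=> /negbTE neq_kl; rewrite /X_at !swap_bidder_A !swap_bidder_S neq_kl. Qed.

Lemma M_swap_bidder x z : M x = M z -> M (swap_bidder x z) = M x.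
Proof. by move=> Mxz; apply: transcript_swap_bidder. Qed.

Lemma Xn_swap_bidder x z : M x = M z -> Xn (swap_bidder x z) = Xn x.
Proof. by move=> Mxz; apply: eq_mktuple => i; rewrite X_at_swap_bidder // ltnW. Qed.

Lemma Xall_at_swap_bidder x z i : M x = M z -> Xn x = Xn z -> (i < n)%N ->
  Xall_at r enc bmsg vmsg (swap_bidder x z) i = Xall_at r enc bmsg vmsg z i.
Proof.
move=> Mxz Xxz lt_in; apply/ffunP => k; rewrite !ffunE.
have [->|neq_kl] := eqVneq k l; last exact: X_at_swap_other.
have := congr1 (fun t => tnth t (Ordinal lt_in)) Xxz.
by rewrite !tnth_mktuple /= => <-; rewrite X_at_swap_bidder // ltnW.
Qed.

Lemma joint_swap_bidder x z : M x = M z -> Xn x = Xn z ->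
  joint r enc bmsg vmsg PA PS PS' W (swap_bidder x z)
  * joint r enc bmsg vmsg PA PS PS' W (swap_bidder z x)
  = joint r enc bmsg vmsg PA PS PS' W x * joint r enc bmsg vmsg PA PS PS' W z.
Proof.
move=> Mxz Xxz.
have channel x' z' : M x' = M z' -> Xn x' = Xn z' ->
    \prod_(i < n) W (Xall_at r enc bmsg vmsg (swap_bidder x' z') i) (tnth (out_Y z') i)
    = \prod_(i < n) W (Xall_at r enc bmsg vmsg z' i) (tnth (out_Y z') i).
  by move=> Mxz' Xxz'; apply: eq_bigr => i _; rewrite Xall_at_swap_bidder.
have regroup (a1 b1 c1 d1 a2 b2 c2 d2 : R) :
    a1 * b1 * c1 * d1 * (a2 * b2 * c2 * d2) = a1 * a2 * (b1 * b2) * (c1 * c2) * (d1 * d2).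
  by ring.
rewrite /joint !regroup (channel x z) // (channel z x) //.
rewrite (prod_swap_at PA (swap_bidder_A x z) (swap_bidder_A z x)).
rewrite (prod_swap_at PS (swap_bidder_S x z) (swap_bidder_S z x)).
by congr (_ * _ * _ * _); rewrite mulrC.
Qed.

End Scheme.

Theorem lemma5 (R : realFieldType) (L n : nat)
  (A S S' X MB MV : 'I_L -> finType) (Y : finType) (r : nat -> nat)
  (enc : forall l : 'I_L, nat -> A l -> S l -> seq (MV l) -> X l)
  (bmsg : forall l : 'I_L, nat -> nat -> A l -> S l -> seq (MV l) -> MB l)
  (vmsg : forall l : 'I_L, nat -> nat -> S' l -> seq (MB l) -> seq Y -> MV l)
  (PA : forall l, A l -> R) (PS : forall l, S l -> R) (PS' : forall l, S' l -> R)
  (W : {dffun forall l, X l} -> Y -> R)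
  (hPA : forall l, is_pmf (PA l)) (hPS : forall l, is_pmf (PS l))
  (hPS' : forall l, is_pmf (PS' l)) (hW : forall x, is_pmf (W x))
  (l : 'I_L) :
  markov_chain (joint r enc bmsg vmsg PA PS PS' W)
    (fun o : outcome n A S S' Y => (out_A o l, out_S o l))
    (fun o : outcome n A S S' Y => (M_rv r bmsg vmsg l o, Xn_rv r enc bmsg vmsg l o))
    (fun o : outcome n A S S' Y => (out_Y o, out_S' o l)).
Proof.
apply: (markov_chain_of_swap (swap := swap_bidder l)).
- exact: swap_bidderK.
- by move=> x z; rewrite swap_bidder_A swap_bidder_S eqxx.
- by [].
- by move=> x z /pair_equal_spec[Mxz Xxz]; rewrite M_swap_bidder // Xn_swap_bidder.
- by move=> x z /pair_equal_spec[Mxz Xxz]; apply: joint_swap_bidder.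
Qed.
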